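(* Let $n\ge k\ge1$ and let $\mathbf{M}=(m_{i,j})$ be a $k\times n$ binary matrix satisfying the MDS Condition, all of whose rows have Hamming weight exactly $n-k+1$, and such that the zero sets $Z_i=\{j\in[n]: m_{i,j}=0\}$ satisfy $|Z_i\cap Z_{i'}|\le1$ for all $i\ne i'$. Then for every prime power $q\ge n+k-1$ there exists an $[n,k]_q$ MDS code having a generator matrix that fits $\mathbf{M}$.
   Context: $[n]=\{1,\ldots,n\}$. $\mathbf{M}$ satisfies the MDS Condition if $|\bigcup_{i\in I}{\sf supp}(\mathbf{M}_i)|\ge n-k+|I|$ for all nonempty $I\subseteq[k]$, where ${\sf supp}(\mathbf{M}_i)=\{j: m_{i,j}\ne0\}$. A matrix $\mathbf{G}=(g_{i,j})\in\mathbb{F}_q^{k\times n}$ fits $\mathbf{M}$ if $g_{i,j}=0$ whenever $m_{i,j}=0$. An $[n,k]_q$ MDS code is a $k$-dimensional linear code in $\mathbb{F}_q^n$ with minimum Hamming distance $n-k+1$. *)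

From HB Require Import structures.
From mathcomp Require Import all_boot all_order all_algebra all_field.
Set Implicit Arguments. Unset Strict Implicit. Unset Printing Implicit Defensive.
Import GRing.Theory.
Local Open Scope ring_scope.

(* Binary matrices are represented as 'M[bool]_(k,n); entry true = 1. *)

Definition bsupp (k n : nat) (M : 'M[bool]_(k, n)) (i : 'I_k) : {set 'I_n} :=
  [set j | M i j].

Definition bzeros (k n : nat) (M : 'M[bool]_(k, n)) (i : 'I_k) : {set 'I_n} :=
  [set j | ~~ M i j].

Definition MDS_condition (k n : nat) (M : 'M[bool]_(k, n)) : Prop :=
  forall I : {set 'I_k}, I != set0 ->
    (n - k + #|I| <= #|\bigcup_(i in I) bsupp M i|)%N.

Definition fits (F : fieldType) (k n : nat) (G : 'M[F]_(k, n))
  (M : 'M[bool]_(k, n)) : Prop :=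
  forall i j, ~~ M i j -> G i j = 0.

Definition hwt (F : fieldType) (n : nat) (v : 'rV[F]_n) : nat :=
  #|[set j | v 0 j != 0]|.

(* A linear code in F^n: a subspace, represented by a matrix whose row space
   is the code (mxalgebra row-space convention). *)
Definition min_dist_is (F : fieldType) (m n : nat) (C : 'M[F]_(m, n)) (d : nat)
  : Prop :=
  (forall c : 'rV[F]_n, (c <= C)%MS -> c != 0 -> (d <= hwt c)%N) /\
  (exists2 c : 'rV[F]_n, (c <= C)%MS & (c != 0) && (hwt c == d)).

(* [n,k] MDS code with generator matrix G: G is k x n, its rows are linearly
   independent (so its row space is k-dimensional and G is a generator matrix
   of it), and the minimum distance of the row space is n - k + 1. *)
Definition is_MDS_generator (F : fieldType) (k n : nat) (G : 'M[F]_(k, n))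
  : Prop :=
  row_free G /\ min_dist_is G (n - k + 1).

From HB Require Import structures.
From mathcomp Require Import all_boot all_order all_algebra all_field.
From mathcomp Require Import zify fingroup perm.

(* Let Z_i be the zero set of row i of M: |Z_i| = k - 1 and |Z_i /\ Z_i'| <= 1.
   For an assignment al : [n] -> F put f_i = prod_(l in Z_i) (X - al l) and
   G_ij = f_i(al j); G fits M by construction.  If al is injective and the f_i
   are linearly independent, a nonzero codeword is a nonzero polynomial of
   degree < k evaluated at n distinct points, so it has weight >= n - k + 1
   and G generates an MDS code.  Independence is certified by the k x k matrix
   E_al(i, t) = f_i(beta t), for k fixed distinct points beta, being invertible.
   1. Combinatorics: after reordering the rows, the coordinates can be coloured
      with k colours so that colour t avoids row t while every colour t < u
      occurs in row u.  The colouring is built greedily from the last row down,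
      each step being a matching problem solved by a Hall-type lemma in which
      every colour conflicts with at most one point.
   2. With al = beta o colour, E_al is triangular with nonzero diagonal.
   3. As a function of one coordinate of al, det E_al is a polynomial of degree
      at most k - 1; since |F| >= n + k - 1 the coordinates can be made
      pairwise distinct one at a time while keeping det E_al nonzero. *)

Set Implicit Arguments. Unset Strict Implicit. Unset Printing Implicit Defensive.

Section ConflictMatching.
Variables (T P : finType) (bad : T -> P -> bool).

Definition one_conflict (N : {set T}) (R : {set P}) : Prop :=
  forall t, t \in N -> forall p q, p \in R -> q \in R -> bad t p -> bad t q -> p = q.

Definition slack (N : {set T}) (R : {set P}) : Prop :=
  #|N| < #|R| \/ (forall p, p \in R -> exists2 t, t \in N & ~~ bad t p).

Lemma one_conflict_sub (N N' : {set T}) (R R' : {set P}) :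
  N' \subset N -> R' \subset R -> one_conflict N R -> one_conflict N' R'.
Proof.
move=> /subsetP sN /subsetP sR H t /sN tN p q /sR pR /sR qR; exact: H.
Qed.

Lemma first_representative (N : {set T}) (R : {set P}) t0 :
  one_conflict N R -> t0 \in N -> #|N| <= #|R| -> slack N R ->
  exists p0, [/\ p0 \in R, ~~ bad t0 p0 & slack (N :\ t0) (R :\ p0)].
Proof.
move=> Huniq t0N HNR Hc; set N' := N :\ t0.
have N0 : 0 < #|N| by apply/card_gt0P; exists t0.
have cN' : #|N'| = #|N|.-1 by rewrite /N' (cardsD1 t0 N) t0N.
have cR' p : p \in R -> #|R :\ p| = #|R|.-1 by move=> pR; rewrite (cardsD1 p R) pR.
have exnb : 1 < #|R| -> exists2 p, p \in R & ~~ bad t0 p.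
  move=> /card_gt1P [x [y [xR yR xy]]].
  case: (boolP (bad t0 x)) => bx; last by exists x.
  case: (boolP (bad t0 y)) => byy; last by exists y.
  by move: xy; rewrite (Huniq t0 t0N x y) ?eqxx.
have [ltNR|eqNR] := ltnP #|N| #|R|.
  have [p pR nb] := exnb (leq_ltn_trans N0 ltNR).
  exists p; split=> //; left; rewrite cN' (cR' p pR); lia.
have eNR : #|N| = #|R| by apply/eqP; rewrite eqn_leq HNR eqNR.
have Hc2 p : p \in R -> exists2 t, t \in N & ~~ bad t p.
  by case: Hc => [|/(_ p)//]; rewrite eNR ltnn.
have [/existsP[ps /andP[psR /forallP allb]]|/existsPn none] :=
   boolP [exists p in R, [forall t in N', bad t p]].
- (* ps conflicts with all of N but t0, so it must be matched to t0 *)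
  exists ps; split=> //.
    have [t tN nbt] := Hc2 ps psR.
    suff E : t = t0 by rewrite -E.
    apply/eqP; apply: contraNT nbt => tt0.
    by have := allb t; rewrite /N' !inE tt0 tN.
  right=> p; rewrite !inE => /andP[pps pR].
  case: (boolP [forall t in N', bad t p]) => [/forallP allbp|]; last first.
    by move/forallPn => [t]; rewrite negb_imply => /andP[tN' nb]; exists t.
  have [N'0|[t tN']] := set_0Vmem N'.
    have : #|R :\ ps| = 0 by rewrite (cR' ps psR) -eNR -cN' N'0 cards0.
    by move/eqP; rewrite cards_eq0 => /eqP RE; move: (in_set0 p); rewrite -RE !inE pps pR.
  have bt := allbp t; rewrite tN' /= in bt.
  have bs := allb t; rewrite tN' /= in bs.
  move: tN'; rewrite inE => /andP[_ tN].
  by move/negP: pps; case; apply/eqP; apply: (Huniq t tN p ps pR psR bt bs).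
- have [p pR nb] : exists2 p, p \in R & ~~ bad t0 p.
    case: (ltnP 1 #|R|) => [/exnb //|R1]; exfalso.
    have N'0 : N' = set0 by apply/eqP; rewrite -cards_eq0 cN'; lia.
    have [p pR] : exists p, p \in R by apply/card_gt0P; rewrite -eNR.
    by have := none p; rewrite pR /=; move/negP; apply; apply/forallP => t; rewrite N'0 inE.
  exists p; split=> //; right=> q; rewrite inE => /andP[_ qR].
  have := none q; rewrite qR /= => /forallPn[t].
  by rewrite negb_imply => /andP[tN' nbt]; exists t.
Qed.

Definition matching (N : {set T}) (R : {set P}) (g : T -> P) : Prop :=
  {in N &, injective g} /\ (forall t, t \in N -> g t \in R /\ ~~ bad t (g t)).

Definition extend (g : T -> P) (t0 : T) (p0 : P) (t : T) : P :=
  if t == t0 then p0 else g t.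

Lemma extend_matching (N : {set T}) (R : {set P}) g t0 p0 :
  t0 \in N -> p0 \in R -> ~~ bad t0 p0 -> matching (N :\ t0) (R :\ p0) g ->
  matching N R (extend g t0 p0).
Proof.
move=> t0N p0R nb0 [ginj gP].
have gN t : t \in N -> t != t0 -> g t \in R :\ p0 /\ ~~ bad t (g t).
  by move=> tN tt0; apply: gP; rewrite !inE tt0 tN.
rewrite /extend; split.
  move=> x y xN yN /=.
  case: (eqVneq x t0) => [->|xt0]; case: (eqVneq y t0) => [->//|yt0].
  + by move=> E; have [] := gN y yN yt0; rewrite -E !inE eqxx.
  + by move=> E; have [] := gN x xN xt0; rewrite E !inE eqxx.
  + by apply: ginj; rewrite !inE ?xt0 ?yt0.
move=> t tN; case: (eqVneq t t0) => [->//|tt0].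
by have [] := gN t tN tt0; rewrite !inE => /andP[_ ->].
Qed.

Lemma conflict_matching (p00 : P) (N : {set T}) (R : {set P}) :
  one_conflict N R -> #|N| <= #|R| -> slack N R -> exists g, matching N R g.
Proof.
have [m leNm] := ubnP #|N|; elim: m N R leNm => // m IH N R leNm Huniq HNR Hc.
have [->|[t0 t0N]] := set_0Vmem N.
  by exists (fun _ => p00); split=> [x|t]; rewrite inE.
have [p0 [p0R nb0 Hc']] := first_representative Huniq t0N HNR Hc.
have cN : #|N :\ t0| = #|N|.-1 by rewrite (cardsD1 t0 N) t0N.
have cR : #|R :\ p0| = #|R|.-1 by rewrite (cardsD1 p0 R) p0R.
have N0 : 0 < #|N| by apply/card_gt0P; exists t0.
have [g gM] : exists g, matching (N :\ t0) (R :\ p0) g.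
  apply: IH Hc'; first by rewrite cN; lia.
    by apply: one_conflict_sub Huniq; apply: subD1set.
  by rewrite cN cR; lia.
by exists (extend g t0 p0); apply: extend_matching.
Qed.

End ConflictMatching.

Lemma card_window k (A : {set 'I_k}) a b :
  (forall t : 'I_k, t \in A -> a <= t < a + b) -> #|A| <= b.
Proof.
move=> H; rewrite cardE -(size_map val) -(size_iota a b).
apply: uniq_leq_size; first by rewrite map_inj_uniq ?enum_uniq //; apply: val_inj.
by move=> x /mapP[t]; rewrite mem_enum => /H tA ->; rewrite mem_iota.
Qed.

Section TriangularColouring.
Variables (P : finType) (k : nat) (Z : nat -> {set P}).
Hypothesis k_gt0 : 0 < k.
Hypothesis card_Z : forall s, s < k -> #|Z s| = k.-1.
Hypothesis meet_Z : forall s t, s < k -> t < k -> s != t -> #|Z s :&: Z t| <= 1.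
Hypothesis no_triple : 2 < k -> forall p, p \in Z 0 -> p \in Z 1 -> p \in Z 2 -> False.
Hypothesis first_pair : 1 < k -> (forall p, p \in Z 0 -> p \in Z 1 -> False) \/
                          (2 < k /\ exists q, (q \in Z 1) && (q \in Z k.-1)).

Lemma meet_once s t p q : s < k -> t < k -> s != t ->
  p \in Z s -> p \in Z t -> q \in Z s -> q \in Z t -> p = q.
Proof.
move=> sk tk st ps pt qs qt.
by apply: (card_le1_eqP (meet_Z sk tk st)); rewrite inE ?ps ?pt ?qs ?qt.
Qed.

Lemma last_lt_k : k.-1 < k. Proof. lia. Qed.

(* Every point misses some row, so it can always be given a harmless colour. *)
Lemma avoid_row p : exists t : 'I_k, p \notin Z t.
Proof.
case: (ltnP 2 k) => [k2|k2].
- case: (boolP (p \in Z 0)) => [p0|p0]; last by exists (Ordinal k_gt0).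
  have k1 : 1 < k by lia.
  case: (boolP (p \in Z 1)) => [p1|p1]; last by exists (Ordinal k1).
  by exists (Ordinal k2); apply/negP => p2; apply: (no_triple k2 p0 p1 p2).
- case: (ltnP 1 k) => [k1|k1].
  + case: (first_pair k1) => [H|[k2' _]]; last by move: k2'; rewrite ltnNge k2.
    case: (boolP (p \in Z 0)) => [p0|p0]; last by exists (Ordinal k_gt0).
    by exists (Ordinal k1); apply/negP => p1; apply: (H p p0 p1).
  + exists (Ordinal k_gt0) => /=.
    have : #|Z 0| = 0 by rewrite card_Z //; lia.
    by move/eqP; rewrite cards_eq0 => /eqP ->; rewrite inE.
Qed.

Definition spare (p : P) : 'I_k := odflt (Ordinal k_gt0) [pick t : 'I_k | p \notin Z t].

Lemma spareP p : p \notin Z (spare p).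
Proof.
rewrite /spare; case: pickP => [t //|H].
by have [t pt] := avoid_row p; move: (H t); rewrite pt.
Qed.

(* The colour t conflicts with the points of row t. *)
Definition in_row (t : 'I_k) (p : P) : bool := p \in Z t.

Definition later (s : nat) (p : P) : bool := [exists u : 'I_k, (s <= u) && (p \in Z u)].

(* Provision for row 1: a point of Z 0 /\ Z 1 lying in no row >= 2 may be
   the only free point of row 1 while conflicting with colour 0; colour 0 must
   then already occur in Z 1, on a point of Z (k-1) coloured at the last row. *)
Definition zero_forced (c : P -> 'I_k) : Prop :=
  2 < k -> forall p, p \in Z 0 -> p \in Z 1 -> ~~ later 2 p ->
  exists2 q, q \in Z 1 & (q \in Z k.-1) && (c q == 0 :> nat).

Definition colouring_from (s : nat) (c : P -> 'I_k) : Prop :=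
 [/\ forall p (t : nat), t < k -> p \in Z t -> later s p -> c p != t :> nat,
     forall u t, s <= u -> u < k -> t < u -> exists2 p, p \in Z u & c p == t :> nat
   & s < k -> zero_forced c].

Section Step.
Variables (s : nat) (c : P -> 'I_k).
Hypothesis s_lt_k : s < k.
Hypothesis c_from : colouring_from s.+1 c.

Definition free_pts : {set P} := Z s :\: [set p | later s.+1 p].
Definition missing : {set 'I_k} :=
  [set t : 'I_k | (t < s) && ~~ [exists p in Z s, later s.+1 p && (c p == t)]].

Lemma free_ptsP p : p \in free_pts = (p \in Z s) && ~~ later s.+1 p.
Proof. by rewrite !inE andbC. Qed.

Lemma missing_lt t : t \in missing -> t < s.
Proof. by rewrite inE => /andP[]. Qed.

(* Each later row meets row s in at most one point, so at least s points of
   row s are free. *)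
Lemma card_free : s <= #|free_pts|.
Proof.
pose O := [set p | later s.+1 p].
have : #|Z s :&: O| <= k - s.+1.
  pose f p := odflt (Ordinal k_gt0) [pick u : 'I_k | (s.+1 <= u) && (p \in Z u)].
  have fP p : later s.+1 p -> (s.+1 <= f p) && (p \in Z (f p)).
    rewrite /f => /existsP[u Hu]; case: pickP => [v -> //|/(_ u)].
    by rewrite Hu.
  rewrite -(card_in_imset (f:=f)).
    apply: (card_window (a := s.+1)) => u /imsetP[p]; rewrite !inE => /andP[_ pO] ->.
    case/andP: (fP p pO) => H _; rewrite H /= subnKC //; exact: ltn_ord.
  move=> p q; rewrite !inE => /andP[ps pO] /andP[qs qO] fpq.
  case/andP: (fP p pO) => H1 H2; case/andP: (fP q qO) => _ H3.
  apply: (meet_once s_lt_k (ltn_ord (f p)) _ ps H2 qs); first by rewrite neq_ltn H1.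
  by rewrite fpq.
have := cardsID O (Z s); rewrite card_Z // => H; rewrite /free_pts -/O; lia.
Qed.

Lemma card_missing : #|missing| <= #|free_pts|.
Proof.
by apply: leq_trans card_free; apply: (card_window (a:=0)) => t /missing_lt.
Qed.

Lemma missing_conflict : one_conflict in_row missing free_pts.
Proof.
move=> t tN p q; rewrite !free_ptsP => /andP[ps _] /andP[qs _] pt qt.
apply: (meet_once s_lt_k (ltn_ord t) _ ps pt qs qt).
by rewrite neq_ltn (missing_lt tN) orbT.
Qed.

Lemma missing_full : #|free_pts| <= #|missing| -> forall t : 'I_k, t < s -> t \in missing.
Proof.
move=> RN.
have NL : missing \subset [set t : 'I_k | t < s].
  by apply/subsetP => t /missing_lt; rewrite inE.
have cardeq : #|missing| = #|[set t : 'I_k | t < s]|.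
  apply/eqP; rewrite eqn_leq (subset_leq_card NL) /=.
  apply: leq_trans RN; apply: leq_trans card_free.
  by apply: (card_window (a:=0)) => t; rewrite inE.
by move=> t ts; rewrite (subset_cardP cardeq NL) inE.
Qed.

(* No free point conflicts with all missing colours: such a point would lie in
   rows 0, 1, 2 (excluded by the ordering), or, for s = 1, in Z 0 /\ Z 1, where
   the provision zero_forced shows that colour 0 is not missing. *)
Lemma missing_slack : slack in_row missing free_pts.
Proof.
case: c_from => _ _ c_forced.
case: (ltnP #|missing| #|free_pts|) => [|RN]; [by left | right].
have Nall := missing_full RN.
move=> p pR; apply/exists_inP; apply: contraT => /exists_inPn H; exfalso.
have pZ (t : 'I_k) : t < s -> p \in Z t by move=> ts; move: (H t (Nall t ts)); rewrite negbK.
move: pR; rewrite free_ptsP => /andP[ps pno].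
have o0 : 0 < k by [].
case: (ltnP 1 s) => [s1|s1].
  have o1 : 1 < k by lia.
  have k2 : 2 < k by lia.
  have p0 := pZ (Ordinal o0) (ltnW s1).
  have p1 := pZ (Ordinal o1) s1.
  have p2 : p \in Z 2.
    case: (ltnP 2 s) => [s2|s2]; first exact: (pZ (Ordinal k2) s2).
    by have -> : 2 = s by lia.
  exact: (no_triple k2 p0 p1 p2).
case: (posnP s) => [s0|s0].
  have : #|free_pts| <= 0.
    by apply: leq_trans RN _; apply: (card_window (a:=0)) => t /missing_lt; rewrite s0.
  by rewrite leqn0 cards_eq0 => /eqP RE; move: (in_set0 p); rewrite -RE free_ptsP ps pno.
have s1' : s = 1 by lia.
have k1 : 1 < k by lia.
have p0 := pZ (Ordinal o0) s0.
have p1 : p \in Z 1 by rewrite -s1'.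
case: (first_pair k1) => [HH|[k2 _]]; first exact: (HH p p0 p1).
have [q q1 /andP[qk q0]] := c_forced ltac:(lia) k2 p p0 p1 ltac:(by rewrite -s1').
have := Nall (Ordinal o0) s0; rewrite inE /= s0 /= => /negP; apply.
apply/exists_inP; exists q; first by rewrite s1'.
apply/andP; split; last by apply/eqP/val_inj => /=; apply/eqP.
by apply/existsP; exists (Ordinal last_lt_k); rewrite qk andbT /= s1'; lia.
Qed.

(* At the last row nothing lies in later rows, so all colours below s are missing. *)
Lemma missing_top : s = k.-1 -> forall t : 'I_k, t < s -> t \in missing.
Proof.
move=> sk1 t ts; rewrite inE ts /=; apply/exists_inP => -[p _ /andP[/existsP[u /andP[ku _]] _]].
by move: (ltn_ord u); lia.
Qed.

(* At the last row, a point q of Z 1 /\ Z (k-1) outside Z 0 can be matched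
   to colour 0: every other free point is compatible with colour 1. *)
Lemma forced_matching (p00 : P) q : s = k.-1 -> 2 < k ->
  [&& q \in Z 1, q \in Z k.-1 & q \notin Z 0] ->
  exists g, matching in_row missing free_pts g /\ g (Ordinal k_gt0) = q.
Proof.
move=> sk1 k2 /and3P[q1 qk q0].
have k1 : 1 < k by lia.
pose t0 : 'I_k := Ordinal k_gt0.
pose t1 : 'I_k := Ordinal k1.
have t0N : t0 \in missing by apply: missing_top => //=; lia.
have t1N : t1 \in missing by apply: missing_top => //=; lia.
have qR : q \in free_pts.
  rewrite free_ptsP sk1 qk /=.
  by apply/existsP => -[u /andP[ku _]]; move: (ltn_ord u); lia.
have [g gM] : exists g, matching in_row (missing :\ t0) (free_pts :\ q) g.
  apply: (conflict_matching p00).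
  - by apply: one_conflict_sub missing_conflict; apply: subD1set.
  - by move: card_missing; rewrite (cardsD1 t0 missing) (cardsD1 q free_pts) t0N qR.
  right=> p /setD1P[pq pR]; exists t1; first by rewrite in_setD1 t1N andbT.
  apply/negP => p1; move/negP: pq; apply; apply/eqP.
  move: pR; rewrite free_ptsP sk1 => /andP[pk _].
  apply: (meet_once k1 last_lt_k _ p1 pk q1 qk); rewrite neq_ltn; apply/orP; left; lia.
exists (extend g t0 q); split; first by apply: extend_matching.
by rewrite /extend eqxx.
Qed.

Lemma missing_matching (p00 : P) : exists g, matching in_row missing free_pts g /\
  (s = k.-1 -> 2 < k -> (exists q, [&& q \in Z 1, q \in Z k.-1 & q \notin Z 0]) ->
   exists2 q, (q \in Z 1) && (q \in Z k.-1) & g (Ordinal k_gt0) = q).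
Proof.
case: (boolP [&& s == k.-1, 2 < k & [exists q, [&& q \in Z 1, q \in Z k.-1 & q \notin Z 0]]]).
  case/and3P => /eqP sk1 k2 /existsP[q qP].
  have [g [gM gq]] := forced_matching p00 sk1 k2 qP.
  exists g; split=> // _ _ _; exists q => //.
  by case/and3P: qP => -> ->.
move=> Hno; have [g gM] := conflict_matching p00 missing_conflict card_missing missing_slack.
exists g; split=> // sk1 k2 [q qP]; move: Hno; rewrite sk1 eqxx k2 /=.
by move/negP; case; apply/existsP; exists q.
Qed.

Section Recolour.
Variable g : 'I_k -> P.
Hypothesis g_match : matching in_row missing free_pts g.
Hypothesis g_forced : s = k.-1 -> 2 < k ->
  (exists q, [&& q \in Z 1, q \in Z k.-1 & q \notin Z 0]) ->
  exists2 q, (q \in Z 1) && (q \in Z k.-1) & g (Ordinal k_gt0) = q.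

Definition recolour (p : P) : 'I_k :=
  if p \in free_pts then
    (if [pick t in missing | g t == p] is Some t then t else spare p)
  else c p.

Lemma recolour_match t : t \in missing -> recolour (g t) = t.
Proof.
case: g_match => ginj gP tN; rewrite /recolour; have [gR _] := gP t tN; rewrite gR.
case: pickP => [t' /andP[t'N /eqP e]|H]; first exact: ginj.
by move: (H t); rewrite tN eqxx.
Qed.

Lemma recolour_fixed p : p \notin free_pts -> recolour p = c p.
Proof. by move=> pR; rewrite /recolour (negbTE pR). Qed.

Lemma recolour_free p (t : nat) : p \in free_pts -> p \in Z t -> recolour p != t :> nat.
Proof.
case: g_match => _ gP pR pt; rewrite /recolour pR; case: pickP => [t' /andP[t'N /eqP e]|_].
  by apply/eqP => et; have [_] := gP t' t'N; rewrite /in_row e et pt.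
by apply/eqP => et; move: (spareP p); rewrite et pt.
Qed.

Lemma later_not_free p u : u < k -> s < u -> p \in Z u -> p \notin free_pts.
Proof.
move=> uk su pu; rewrite free_ptsP negb_and negbK; apply/orP; right.
by apply/existsP; exists (Ordinal uk); rewrite /= su pu.
Qed.

Lemma recolour_avoid p (t : nat) : t < k -> p \in Z t -> later s p -> recolour p != t :> nat.
Proof.
case: c_from => c_avoid _ _ tk pt onF.
case: (boolP (p \in free_pts)) => pR; first exact: recolour_free.
rewrite recolour_fixed //; apply: c_avoid => //.
move/existsP: onF => [u /andP[su pu]].
case: (ltnP s u) => [su'|us]; first by apply/existsP; exists u; rewrite su' pu.
have pZs : p \in Z s by have -> : s = u by lia.
by move: pR; rewrite free_ptsP pZs negbK.
Qed.

Lemma recolour_hits u t : s <= u -> u < k -> t < u ->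
  exists2 p, p \in Z u & recolour p == t :> nat.
Proof.
case: c_from => _ c_hits _ su uk tu.
case: (ltnP s u) => [su'|us].
  have [p pu cp] := c_hits u t su' uk tu.
  by exists p => //; rewrite recolour_fixed //; apply: (later_not_free uk su').
have eu : u = s by lia.
rewrite eu; have tk : t < k by lia.
have ts : t < s by lia.
case: (boolP (Ordinal tk \in missing)) => tN.
  case: g_match => _ gP; have [gR _] := gP _ tN.
  exists (g (Ordinal tk)); first by move: gR; rewrite free_ptsP => /andP[].
  by rewrite recolour_match.
move: tN; rewrite inE /= ts /= negbK => /exists_inP[p ps /andP[pO /eqP cp]].
by exists p => //; rewrite recolour_fixed ?cp // free_ptsP pO andbF.
Qed.

Lemma recolour_forced : zero_forced recolour.
Proof.
case: c_from => _ _ c_forced k2 p p0 p1 pno.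
case: (ltnP s.+1 k) => [s1k|ks].
  have [q q1 /andP[qk q0]] := c_forced s1k k2 p p0 p1 pno.
  exists q => //; rewrite qk /= recolour_fixed //.
  by apply: (later_not_free last_lt_k) => //; lia.
have sk1 : s = k.-1 by lia.
have k1 : 1 < k by lia.
case: (first_pair k1) => [HH|[_ [q0 /andP[q01 q0k]]]]; first by case: (HH p p0 p1).
case: (boolP (q0 \in Z 0)) => q00.
  have epq : p = q0 by apply: (meet_once k_gt0 k1 (isT : 0 != 1) p0 p1 q00 q01).
  move: pno; rewrite epq => /negP[]; apply/existsP; exists (Ordinal last_lt_k).
  by rewrite q0k andbT /=; lia.
have [q qP gq] := g_forced sk1 k2 (ex_intro _ q0 (introT and3P (And3 q01 q0k q00))).
case/andP: qP => q1 qk.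
have t0N : Ordinal k_gt0 \in missing by apply: missing_top => //=; lia.
by exists q => //; rewrite qk /= -gq recolour_match.
Qed.

End Recolour.

Lemma step_colouring (p00 : P) : exists c', colouring_from s c'.
Proof.
have [g [gM gF]] := missing_matching p00.
exists (recolour g); split.
- exact: recolour_avoid.
- exact: recolour_hits.
- by move=> _; exact: recolour_forced.
Qed.

End Step.

Lemma triangular_colouring (p00 : P) : exists c : P -> 'I_k,
   (forall p (t : nat), t < k -> p \in Z t -> c p != t :> nat) /\
   (forall s t, t < s -> s < k -> exists2 p, p \in Z s & c p == t :> nat).
Proof.
suff [c [c_avoid c_hits _]] : exists c, colouring_from 0 c.
  exists c; split; last by move=> s t ts sk; apply: c_hits.
  by move=> p t tk pt; apply: c_avoid => //; apply/existsP; exists (Ordinal tk); rewrite pt.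
suff : forall j, j <= k -> exists c, colouring_from (k - j) c by move/(_ k (leqnn k)); rewrite subnn.
elim=> [_|j IH jk].
  exists (fun _ => Ordinal k_gt0); rewrite subn0; split.
  - by move=> p t tk pt /existsP[u /andP[ku _]]; move: (ltn_ord u); rewrite ltnNge ku.
  - by move=> u t ku uk; move: uk; rewrite ltnNge ku.
  - by rewrite ltnn.
have [c Hc] := IH (ltnW jk).
have e : k - j = (k - j.+1).+1 by lia.
rewrite e in Hc; apply: step_colouring Hc p00; lia.
Qed.

End TriangularColouring.

Lemma perm3 (T : finType) (a b c i j l : T) :
  a != b -> a != c -> b != c -> i != j -> i != l -> j != l ->
  exists s : {perm T}, [/\ s i = a, s j = b & s l = c].
Proof.
move=> ab ac bc ij il jl.
pose s1 := tperm i a.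
pose s2 := tperm (s1 j) b.
have s1ja : s1 j != a by rewrite -[a](tpermL i a) (inj_eq perm_inj) eq_sym.
have s12i : (s1 * s2)%g i = a by rewrite permM tpermL tpermD // eq_sym.
have s12j : (s1 * s2)%g j = b by rewrite permM tpermL.
pose s3 := tperm ((s1 * s2)%g l) c.
have la : (s1 * s2)%g l != a by rewrite -s12i (inj_eq perm_inj) eq_sym.
have lb : (s1 * s2)%g l != b by rewrite -s12j (inj_eq perm_inj) eq_sym.
exists (s1 * s2 * s3)%g; split.
- by rewrite permM s12i tpermD // eq_sym.
- by rewrite permM s12j tpermD // eq_sym.
- by rewrite permM tpermL.
Qed.

Section RowOrder.
Variables (P : finType) (k : nat) (Z : 'I_k -> {set P}).
Hypothesis k_gt0 : 0 < k.
Hypothesis card_Z : forall i, #|Z i| = k.-1.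
Hypothesis meet_Z : forall i j, i != j -> #|Z i :&: Z j| <= 1.
Hypothesis cover : forall p, exists i, p \notin Z i.

Definition ordS (s : nat) : 'I_k := insubd (Ordinal k_gt0) s.

Lemma ordSK (s : nat) : s < k -> val (ordS s) = s.
Proof. by move=> sk; rewrite /ordS val_insubd sk. Qed.

Lemma ordS_inj s t : s < k -> t < k -> ordS s = ordS t -> s = t.
Proof. by move=> sk tk e; rewrite -(ordSK sk) -(ordSK tk) e. Qed.

Lemma ordS_val (t : 'I_k) : ordS t = t.
Proof. by apply: val_inj; rewrite ordSK. Qed.

Definition good_order (r : {perm 'I_k}) : Prop :=
  (2 < k -> forall p, p \in Z (r (ordS 0)) -> p \in Z (r (ordS 1)) -> p \in Z (r (ordS 2)) -> False) /\
  (1 < k -> (forall p, p \in Z (r (ordS 0)) -> p \in Z (r (ordS 1)) -> False) \/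
            (2 < k /\ exists q, (q \in Z (r (ordS 1))) && (q \in Z (r (ordS k.-1))))).

(* At most two rows: the identity order works, since no point lies in all rows. *)
Lemma good_order_small : k <= 2 -> good_order 1.
Proof.
move=> k2; split=> [|_]; first by lia.
left => p; rewrite !perm1 => p0 p1.
have [i pi] := cover p.
have ik : nat_of_ord i < 2 by have := ltn_ord i; lia.
move: pi; rewrite -(ordS_val i).
by case: (nat_of_ord i) ik => [|[|]] //= _; rewrite ?p0 ?p1.
Qed.

Lemma ordS012 : 2 < k -> [/\ ordS 0 != ordS 1, ordS 0 != ordS 2 & ordS 1 != ordS 2].
Proof.
move=> k3; have o0 : 0 < k by lia.
have o1 : 1 < k by lia.
by split; apply/eqP => /ordS_inj; [move/(_ o0 o1) | move/(_ o0 k3) | move/(_ o1 k3)].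
Qed.

(* Two disjoint rows are put first. *)
Lemma good_order_disjoint a b : 2 < k -> a != b -> [disjoint Z a & Z b] ->
  exists r, good_order r.
Proof.
move=> k3 ab dab; have [o01 o02 o12] := ordS012 k3.
have [c [ca cb]] : exists c, c != a /\ c != b.
  case: (eqVneq (ordS 0) a) => [e0|n0]; last first.
    case: (eqVneq (ordS 0) b) => [e0'|n0']; last by exists (ordS 0).
    case: (eqVneq (ordS 1) a) => [e1|n1]; last by exists (ordS 1); split => //; rewrite -e0' eq_sym.
    by exists (ordS 2); split; [rewrite -e1 eq_sym | rewrite -e0' eq_sym].
  case: (eqVneq (ordS 1) b) => [e1|n1]; last by exists (ordS 1); split => //; rewrite -e0 eq_sym.
  by exists (ordS 2); split; [rewrite -e0 eq_sym | rewrite -e1 eq_sym].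
have [r [r0 r1 _]] := perm3 ab (ltac:(by rewrite eq_sym) : a != c)
  (ltac:(by rewrite eq_sym) : b != c) o01 o02 o12.
have nab p : p \in Z a -> p \in Z b -> False.
  by move=> pa pb; move: (in_set0 p); rewrite -(disjoint_setI0 dab) inE pa pb.
exists r; split; first by move=> _ p; rewrite r0 r1 => pa pb _; apply: (nab p).
by move=> _; left => p; rewrite r0 r1; apply: nab.
Qed.

(* If all rows meet, rows 0 and 1 share a point that row 2 misses; then
   rows 1 and k-1 also share a point. *)
Lemma good_order_meeting : 2 < k ->
  (forall a b, a != b -> exists p, (p \in Z a) && (p \in Z b)) -> exists r, good_order r.
Proof.
move=> k3 nd; have [o01 o02 o12] := ordS012 k3.
have [p0 /andP[p0a p0b]] := nd _ _ o01.
have [c pc] := cover p0.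
have ca : ordS 0 != c by apply: contraNneq pc => <-.
have cb : ordS 1 != c by apply: contraNneq pc => <-.
have [r [r0 r1 r2]] := perm3 o01 ca cb o01 o02 o12.
exists r; split.
  move=> _ p; rewrite r0 r1 r2 => pa pb pcc.
  have e : p = p0 by apply: (card_le1_eqP (meet_Z o01)); rewrite inE ?pa ?pb ?p0a ?p0b.
  by move: pc; rewrite -e pcc.
move=> _; right; split => //.
have o1 : 1 < k by lia.
have kk : k.-1 < k by lia.
have ne : r (ordS 1) != r (ordS k.-1).
  rewrite (inj_eq perm_inj); apply/eqP => /(ordS_inj o1 kk); lia.
exact: nd _ _ ne.
Qed.

Lemma exists_good_order : exists r, good_order r.
Proof.
case: (ltnP 2 k) => [k3|k2]; last by exists 1%g; apply: good_order_small.
case: (boolP [exists a, exists b, (a != b) && [disjoint Z a & Z b]]).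
  by move=> /existsP[a /existsP[b /andP[ab dab]]]; apply: (good_order_disjoint k3 ab dab).
move/existsPn => H; apply: good_order_meeting => // a b ab.
move/existsPn: (H a) => /(_ b); rewrite ab /= -setI_eq0 => /set0Pn[p].
by rewrite inE => pab; exists p.
Qed.

Lemma row_colouring (p00 : P) : exists (r : {perm 'I_k}) (c : P -> 'I_k),
  (forall p t, p \in Z (r t) -> c p != t) /\
  (forall t u : 'I_k, t < u -> exists2 p, p \in Z (r u) & c p = t).
Proof.
have [r [no_triple first_pair]] := exists_good_order.
pose Zr t := Z (r (ordS t)).
have card_Zr t : t < k -> #|Zr t| = k.-1 by move=> _; apply: card_Z.
have meet_Zr t u : t < k -> u < k -> t != u -> #|Zr t :&: Zr u| <= 1.
  move=> tk uk tu; apply: meet_Z; rewrite (inj_eq perm_inj).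
  by apply: contra tu => /eqP /(ordS_inj tk uk) ->.
have [c [c_avoid c_hits]] :=
  triangular_colouring k_gt0 card_Zr meet_Zr no_triple first_pair p00.
exists r, c; split.
  by move=> p t pt; apply: (c_avoid p t (ltn_ord t)); rewrite /Zr ordS_val.
move=> t u tu; have [p pu /eqP cp] := c_hits u t tu (ltn_ord u).
by exists p; [move: pu; rewrite /Zr ordS_val | apply: val_inj].
Qed.

End RowOrder.

Import GRing.Theory.
Local Open Scope ring_scope.

Lemma size_det_rows (R : idomainType) (k : nat) (A : 'M[{poly R}]_k) (w : 'I_k -> nat) :
  (forall i t, size (A i t) <= (w i).+1)%N -> (size (\det A) <= (\sum_i w i).+1)%N.
Proof.
move=> Aw; rewrite /determinant; apply: leq_trans (size_sum _ _ _) _.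
apply/bigmax_leqP_seq => s _ _.
have -> : size ((-1) ^+ odd_perm s * \prod_i A i (s i)) = size (\prod_i A i (s i)).
  by case: (odd_perm s); rewrite ?expr1 ?expr0 ?mulN1r ?mul1r ?size_polyN.
case: (boolP [forall i, A i (s i) != 0]) => [/forallP nz|/forallPn[i /negPn /eqP z]];
  last by rewrite (bigD1 i) //= z mul0r size_poly0.
rewrite size_prod; last by move=> i _; apply: nz.
have : (\sum_i size (A i (s i)) <= \sum_i (w i).+1)%N by apply: leq_sum => i _; apply: Aw.
have -> : (\sum_i (w i).+1 = \sum_i w i + k)%N.
  rewrite (eq_bigr (fun i => w i + 1)%N) => [|i _]; last by rewrite addn1.
  by rewrite big_split /= sum1_card card_ord.
by rewrite cardT size_enum_ord; lia.
Qed.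

Section Evaluation.
Variables (F : finFieldType) (n k : nat) (Z : 'I_k -> {set 'I_n}) (beta : 'I_k -> F).

Definition fpol (al : 'I_n -> F) (i : 'I_k) : {poly F} :=
  \prod_(l in Z i) ('X - (al l)%:P).

Lemma fpolE al i x : (fpol al i).[x] = \prod_(l in Z i) (x - al l).
Proof. by rewrite /fpol horner_prod; apply: eq_bigr => l _; rewrite hornerXsubC. Qed.

(* The f_i evaluated at the auxiliary points; it is nonsingular iff the f_i
   are linearly independent. *)
Definition Emx (al : 'I_n -> F) : 'M[F]_k := \matrix_(i, t) (fpol al i).[beta t].

Lemma Emx_eq al al' : al =1 al' -> Emx al = Emx al'.
Proof.
move=> H; apply/matrixP => i t; rewrite !mxE !fpolE.
by apply: eq_bigr => l _; rewrite H.
Qed.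

(* Giving coordinate p the value beta (c p) for a triangular colouring c makes
   E, with rows permuted by r, triangular with nonzero diagonal. *)
Lemma colouring_det (r : {perm 'I_k}) (c : 'I_n -> 'I_k) : injective beta ->
  (forall p t, p \in Z (r t) -> c p != t) ->
  (forall t u : 'I_k, (t < u)%N -> exists2 p, p \in Z (r u) & c p = t) ->
  \det (Emx (fun p => beta (c p))) != 0.
Proof.
move=> beta_inj c_avoid c_hits.
have trig : is_trig_mx (row_perm r (Emx (fun p => beta (c p))))^T.
  apply/is_trig_mxP => t u tu; rewrite !mxE fpolE.
  have [p pu cp] := c_hits t u tu.
  by apply/eqP/prodf_eq0; exists p => //; rewrite cp subrr.
have : \det (row_perm r (Emx (fun p => beta (c p)))) != 0.
  rewrite -det_tr (det_trig trig).
  apply/prodf_neq0 => t _; rewrite !mxE fpolE; apply/prodf_neq0 => l lZ.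
  by rewrite subr_eq0 (inj_eq beta_inj) eq_sym c_avoid.
by rewrite row_permE det_mulmx; apply: contraNneq => ->; rewrite mulr0.
Qed.

Definition upd (al : 'I_n -> F) (j : 'I_n) (x : F) : 'I_n -> F :=
  fun l => if l == j then x else al l.

(* E for upd al j x as a polynomial matrix in x. *)
Definition upd_mx (al : 'I_n -> F) (j : 'I_n) : 'M[{poly F}]_k := \matrix_(i, t)
   if j \in Z i then ((beta t)%:P - 'X) * (\prod_(l in Z i :\ j) (beta t - al l))%:P
   else ((fpol al i).[beta t])%:P.

Lemma horner_det_upd_mx al j x : (\det (upd_mx al j)).[x] = \det (Emx (upd al j x)).
Proof.
rewrite -horner_evalE -det_map_mx; congr (\det _).
apply/matrixP => i t; rewrite !mxE [RHS]fpolE.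
rewrite -[LHS]/(_.[x]); case: ifP => jZ.
  rewrite hornerM !hornerE (bigD1 j jZ) /upd eqxx; congr (_ * _).
  rewrite [RHS](eq_bigl (fun l => l \in Z i :\ j)); last by move=> l; rewrite in_setD1 andbC.
  by apply: eq_bigr => l; rewrite in_setD1 => /andP[lj _]; rewrite (negbTE lj).
rewrite hornerC fpolE; apply: eq_bigr => l lZ; rewrite /upd.
by case: eqP => // lj; move: jZ; rewrite -lj lZ.
Qed.

(* Only the rows whose zero set contains j depend on x, each linearly. *)
Lemma size_det_upd_mx al j : (size (\det (upd_mx al j)) <= #|[set i | j \in Z i]|.+1)%N.
Proof.
have -> : #|[set i | j \in Z i]| = (\sum_i (j \in Z i))%N.
  by rewrite -sum1_card big_mkcond /=; apply: eq_bigr => i _; rewrite inE; case: (j \in Z i).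
apply: size_det_rows => i t; rewrite mxE; case: ifP => _; last exact: size_polyC_leq1.
apply: leq_trans (size_polyMleq _ _) _.
rewrite -opprB size_polyN size_XsubC.
by have := size_polyC_leq1 (\prod_(l in Z i :\ j) (beta t - al l)); case: size => [|[]].
Qed.

Hypothesis cover : forall j, exists i, j \notin Z i.

(* Since j misses some zero set, det E is a nonzero polynomial of degree at
   most k - 1 in the value of coordinate j. *)
Lemma few_bad_values al j : \det (Emx al) != 0 ->
  (#|[set x | \det (Emx (upd al j x)) == 0%R]| <= k.-1)%N.
Proof.
move=> Hdet; set Q := \det (upd_mx al j).
have Q0 : Q != 0.
  apply: contraNneq Hdet => HQ.
  have <- : Emx (upd al j (al j)) = Emx al.
    by apply: Emx_eq => l; rewrite /upd; case: eqP => // ->.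
  by rewrite -horner_det_upd_mx -/Q HQ horner0.
have [i0 ji0] := cover j.
have Hc : (#|[set i | j \in Z i]| <= k.-1)%N.
  have H1 : [set i | j \in Z i] \subset [set: 'I_k] :\ i0.
    by apply/subsetP => i; rewrite !inE andbT; apply: contraTneq => ->.
  apply: leq_trans (subset_leq_card H1) _.
  have := cardsD1 i0 [set: 'I_k]; rewrite cardsT card_ord inE add1n => e.
  by rewrite [in X in (_ <= X)%N]e.
have : (#|[set x | \det (Emx (upd al j x)) == 0%R]| < size Q)%N.
  rewrite cardE; apply: max_poly_roots => //; last exact: enum_uniq.
  by apply/allP => x; rewrite mem_enum inE /root horner_det_upd_mx.
have := size_det_upd_mx al j; rewrite -/Q; lia.
Qed.

(* The coordinate j with value m can be given a value different from all the
   other coordinates while keeping E nonsingular: at most k - 1 values are bad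
   for the determinant and at most n - 1 are taken, out of n + k - 1. *)
Lemma separate_coordinate al m (mn : (m < n)%N) : (n + k - 1 <= #|F|)%N ->
  \det (Emx al) != 0 -> (forall l1 l2 : 'I_n, l1 != l2 -> (l1 < m)%N -> al l1 != al l2) ->
  exists al', \det (Emx al') != 0 /\
    (forall l1 l2 : 'I_n, l1 != l2 -> (l1 < m.+1)%N -> al' l1 != al' l2).
Proof.
move=> hF d Hal; pose j : 'I_n := Ordinal mn.
have [i0 _] := cover j.
have k0 : (0 < k)%N by apply: leq_ltn_trans (ltn_ord i0).
pose B := [set x | \det (Emx (upd al j x)) == 0%R] :|: [set al l | l in [set: 'I_n] :\ j].
have cB : (#|B| < #|F|)%N.
  apply: leq_ltn_trans (leq_card_setU _ _) _.
  have h1 := few_bad_values j d.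
  have h2 : (#|[set al l | l in [set: 'I_n] :\ j]| <= n.-1)%N.
    apply: leq_trans (leq_imset_card _ _) _.
    have := cardsD1 j [set: 'I_n]; rewrite cardsT card_ord inE add1n => e.
    by rewrite [in X in (_ <= X)%N]e.
  lia.
have [x xB] : exists x, x \notin B.
  apply/existsP; apply: contraTT cB => /existsPn H; rewrite -leqNgt.
  by rewrite -cardsT subset_leq_card //; apply/subsetP => x _; move: (H x); rewrite negbK.
exists (upd al j x); split; first by move: xB; rewrite !inE negb_or => /andP[].
move=> l1 l2 ne l1m; rewrite /upd.
case: (eqVneq l1 j) => [e1|n1]; case: (eqVneq l2 j) => [e2|n2].
- by move: ne; rewrite e1 e2 eqxx.
- apply: contraNneq xB => ->; rewrite inE; apply/orP; right; apply/imsetP; exists l2 => //.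
  by rewrite !inE n2.
- apply: contraNneq xB => <-; rewrite inE; apply/orP; right; apply/imsetP; exists l1 => //.
  by rewrite !inE n1.
- apply: Hal => //.
  have : nat_of_ord l1 != m by move: n1; apply: contra => /eqP e; apply/eqP/val_inj.
  lia.
Qed.

Lemma injective_nonsingular al0 : \det (Emx al0) != 0 -> (n + k - 1 <= #|F|)%N ->
  exists al : 'I_n -> F, injective al /\ \det (Emx al) != 0.
Proof.
move=> d0 hF.
suff /(_ n (leqnn n)) [al [d Hal]] : forall m, (m <= n)%N -> exists al,
    \det (Emx al) != 0 /\ (forall l1 l2 : 'I_n, l1 != l2 -> (l1 < m)%N -> al l1 != al l2).
  exists al; split => // l1 l2 e; apply/eqP; apply: contraT => ne.
  by have := Hal l1 l2 ne (ltn_ord l1); rewrite e eqxx.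
elim=> [_|m IH mn]; first by exists al0; split.
have [al [d Hal]] := IH (ltnW mn).
exact: (separate_coordinate mn hF d Hal).
Qed.

Section Code.
Variables (al : 'I_n -> F).
Hypothesis card_Z : forall i, #|Z i| = k.-1.
Hypothesis k_gt0 : (0 < k)%N.

Definition Gmx : 'M[F]_(k, n) := \matrix_(i, j) (fpol al i).[al j].

Lemma Gmx_vanish i j : j \in Z i -> Gmx i j = 0.
Proof. by move=> jZ; rewrite mxE fpolE (bigD1 j) //= subrr mul0r. Qed.

Lemma Gmx_row_weight i : (hwt (row i Gmx) <= n - k + 1)%N.
Proof.
have : [set j | row i Gmx 0 j != 0] \subset ~: Z i.
  by apply/subsetP => j; rewrite !inE mxE; apply: contra => /Gmx_vanish ->.
move/subset_leq_card; rewrite /hwt.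
move=> h; apply: (leq_trans h); rewrite cardsCs setCK card_ord card_Z; lia.
Qed.

Hypothesis al_inj : injective al.
Hypothesis E_unit : \det (Emx al) != 0.

Lemma size_fpol i : size (fpol al i) = k.
Proof. by rewrite /fpol -big_enum size_prod_XsubC -cardE card_Z prednK. Qed.

Definition msg_poly (u : 'rV[F]_k) : {poly F} := \sum_i u 0 i *: fpol al i.

Lemma size_msg_poly u : (size (msg_poly u) <= k)%N.
Proof.
apply: leq_trans (size_sum _ _ _) _; apply/bigmax_leqP_seq => i _ _.
by apply: leq_trans (size_scale_leq _ _) _; rewrite size_fpol.
Qed.

Lemma mul_Gmx u j : (u *m Gmx) 0 j = (msg_poly u).[al j].
Proof. by rewrite !mxE /msg_poly horner_sum; apply: eq_bigr => i _; rewrite hornerZ mxE. Qed.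

Lemma mul_Emx u t : (u *m Emx al) 0 t = (msg_poly u).[beta t].
Proof. by rewrite !mxE /msg_poly horner_sum; apply: eq_bigr => i _; rewrite hornerZ mxE. Qed.

(* The f_i are linearly independent because E is invertible. *)
Lemma msg_poly_eq0 u : msg_poly u = 0 -> u = 0.
Proof.
move=> H.
have uE : u *m Emx al = 0 by apply/rowP => t; rewrite mul_Emx H horner0 mxE.
have unit : Emx al \in unitmx by rewrite unitmxE unitfE.
by rewrite -(mulmxK unit u) uE mul0mx.
Qed.

Lemma card_zero_coords u : msg_poly u != 0 ->
  (#|[set j | (msg_poly u).[al j] == 0%R]| <= k.-1)%N.
Proof.
move=> nz.
have : (size (map al (enum [set j | (msg_poly u).[al j] == 0%R])) < size (msg_poly u))%N.
  apply: max_poly_roots => //.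
    by apply/allP => x /mapP[j]; rewrite mem_enum inE /root => /eqP h ->; rewrite h.
  by rewrite map_inj_uniq // enum_uniq.
rewrite size_map -cardE => h; have := leq_trans h (size_msg_poly u); lia.
Qed.

Hypothesis k_le_n : (k <= n)%N.

(* More than k - 1 zeros force the message to vanish, so G has full row rank. *)
Lemma Gmx_row_free : row_free Gmx.
Proof.
apply: inj_row_free => v vG; apply: msg_poly_eq0; apply/eqP; apply: contraT => nz.
have := card_zero_coords nz.
have -> : [set j | (msg_poly v).[al j] == 0] = [set: 'I_n].
  by apply/setP => j; rewrite !inE -mul_Gmx vG mxE eqxx.
rewrite cardsT card_ord; lia.
Qed.

Lemma Gmx_weight c : (c <= Gmx)%MS -> c != 0 -> (n - k + 1 <= hwt c)%N.
Proof.
move=> /submxP[u ->] nz.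
have nzp : msg_poly u != 0.
  by apply: contraNneq nz => h; apply/eqP/rowP => j; rewrite mul_Gmx h horner0 mxE.
have := card_zero_coords nzp; rewrite /hwt.
have -> : [set j | (u *m Gmx) 0 j != 0] = ~: [set j | (msg_poly u).[al j] == 0].
  by apply/setP => j; rewrite !inE mul_Gmx.
have := cardsC [set j | (msg_poly u).[al j] == 0]; rewrite card_ord; lia.
Qed.

Lemma Gmx_MDS : is_MDS_generator Gmx.
Proof.
split; first exact: Gmx_row_free.
pose i0 : 'I_k := Ordinal k_gt0.
have row0 : row i0 Gmx != 0.
  rewrite rowE; apply/eqP => h.
  have : delta_mx 0 i0 = 0 :> 'rV[F]_k.
    by apply: (row_free_inj Gmx_row_free); rewrite h mul0mx.
  by move/matrixP/(_ 0 i0); rewrite !mxE !eqxx => /eqP; rewrite oner_eq0.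
split; first exact: Gmx_weight.
exists (row i0 Gmx); first exact: row_sub.
by rewrite row0 eqn_leq Gmx_row_weight Gmx_weight ?row_sub.
Qed.

End Code.
End Evaluation.

Lemma exists_injection (T : finType) k : (k <= #|T|)%N -> exists f : 'I_k -> T, injective f.
Proof.
move=> kT; exists (fun t => enum_val (widen_ord kT t)).
by move=> x y /enum_val_inj e; apply: val_inj; move/(congr1 val): e.
Qed.

Lemma card_bzeros k n (M : 'M[bool]_(k, n)) i :
  (1 <= k)%N -> (k <= n)%N -> #|bsupp M i| = (n - k + 1)%N -> #|bzeros M i| = k.-1.
Proof.
move=> k1 kn hsupp.
have -> : bzeros M i = ~: bsupp M i by apply/setP => j; rewrite !inE.
by rewrite cardsCs setCK card_ord hsupp; lia.
Qed.

(* Applied to all rows, the MDS condition says every column has a nonzero entry. *)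
Lemma MDS_cover k n (M : 'M[bool]_(k, n)) :
  (0 < k)%N -> MDS_condition M -> forall j, exists i, j \notin bzeros M i.
Proof.
move=> k1 MDS j; apply/existsP; apply: contraT => /existsPn nocol.
have nz : [set: 'I_k] != set0 by apply/set0Pn; exists (Ordinal k1); rewrite inE.
have := MDS _ nz; rewrite cardsT card_ord.
have sub : \bigcup_(i in [set: 'I_k]) bsupp M i \subset [set: 'I_n] :\ j.
  apply/subsetP => x /bigcupP[i _]; rewrite !inE andbT; apply: contraTneq => ->.
  by have := nocol i; rewrite inE negbK.
have := subset_leq_card sub; have := cardsD1 j [set: 'I_n]; rewrite cardsT card_ord inE /=.
lia.
Qed.

Lemma Gmx_fits (F : finFieldType) k n (M : 'M[bool]_(k, n)) (al : 'I_n -> F) :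
  fits (Gmx (bzeros M) al) M.
Proof. by move=> i j nM; apply: Gmx_vanish; rewrite inE. Qed.

Unset Implicit Arguments.

Theorem mainTheorem7 (n k : nat) (M : 'M[bool]_(k, n)) :
  (1 <= k)%N -> (k <= n)%N ->
  MDS_condition M ->
  (forall i : 'I_k, #|bsupp M i| = (n - k + 1)%N) ->
  (forall i i' : 'I_k, i != i' -> (#|bzeros M i :&: bzeros M i'| <= 1)%N) ->
  forall F : finFieldType, (n + k - 1 <= #|F|)%N ->
    exists G : 'M[F]_(k, n), fits G M /\ is_MDS_generator G.
Proof.
move=> k1 kn MDS hsupp hpair F hF.
have card_Z i : #|bzeros M i| = k.-1 by apply: card_bzeros.
have cover := MDS_cover k1 MDS.
have [r [c [c_avoid c_hits]]] := row_colouring k1 card_Z hpair cover (Ordinal (leq_trans k1 kn)).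
have [beta beta_inj] : exists beta : 'I_k -> F, injective beta.
  by apply: exists_injection; apply: leq_trans hF; lia.
have d0 := colouring_det beta_inj c_avoid c_hits.
have [al [al_inj dE]] := injective_nonsingular cover d0 hF.
exists (Gmx (bzeros M) al); split; first exact: Gmx_fits.
exact: Gmx_MDS card_Z k1 al_inj dE kn.
Qed.
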